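(* (SEM-ME) Let $M$ be a canonical linear SEM-ME satisfying SEM-ME faithfulness part (a). Then every model in the AOG equivalence class of $M$ satisfies SEM-ME faithfulness part (a), and every canonical SEM-ME whose mixing matrix equals $\mathbf W^{ME}(M)$ up to permutation and nonzero scaling of columns and which satisfies part (a) belongs to the AOG equivalence class of $M$. Hence, under separability and part (a), $M$ is identifiable exactly up to its AOG equivalence class. (SEM-UR) The analogous statement holds for a linear SEM-UR satisfying SEM-UR faithfulness part (a) and its AOG equivalence class.
   Context: Linear SEM-ME (canonical form): underlying variables $V_1,\dots,V_p$ partitioned into unobserved $\mathcal Z$ and observed $\mathcal Y$, $V_i=\sum_{V_j\in Pa(V_i)}c_{ij}V_j+N_{V_i}$ over a DAG (edge $V_j\to V_i$ of weight $c_{ij}$ iff $c_{ij}\ne0$), measurements $U_i=Z_i+N_{U_i}$, independent noises. A u-leaf node is a $Z$-variable with no children; all others are nu-leaf nodes; in canonical form u-leaf nodes have zero noise and nu-leaf nodes nondegenerate noise. A model is specified by its weighted DAG on the underlying variables and its set of u-leaf nodes. The mixing matrix $\mathbf W^{ME}$ has rows indexed by underlying variables, columns by noise terms $N_{V'}$ of nu-leaf nodes, $(V,N_{V'})$ entry = total causal effect of $V'$ on $V$ (sum over directed paths of products of weights; $1$ if $V=V'$). Linear SEM-UR: $H=N_H$, $X=\mathbf BH+\mathbf AX+N_X$ with $\mathbf A$ strictly lower triangular, independent noises; diagram: edges $H_i\to X_j$ iff $b_{ji}\ne0$, $X_k\to X_j$ iff $a_{jk}\ne0$; mixing matrix $\mathbf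 W^{UR}=[(\mathbf I-\mathbf A)^{-1}\mathbf B\;\;(\mathbf I-\mathbf A)^{-1}]$, rows indexed by observed variables, columns by noise terms. Separability: the mixing matrix can be recovered from the distribution of the observed variables up to permutation and nonzero scaling of its columns. Faithfulness part (a): SEM-ME: the total causal effect of any underlying variable on any of its descendants is nonzero. SEM-UR: the total causal effect of any observed or latent variable on any of its descendants is nonzero. Ancestral ordered grouping (AOG). SEM-ME: each nu-leaf node in its own group; each u-leaf node $Z_j$ goes into the group of a parent $V_i$ if $Z_j$ has no other parents or all its other parents are ancestors of $V_i$, else into a singleton group. SEM-UR: each observed variable in its own group; each latent $H_j$ goes into the group of a child $X_i$ if $H_j$ has no other children or all its other children are descendants of $X_i$, else into a singleton group. AOG equivalence class of $M$: the set of models (canonical SEM-ME on the same underlying variables; resp. SEM-UR on the same observed variables with the same number of latent variables) whose mixing matrix equals that of $M$ up to permutation and nonzero scaling of columns and whose AOG partition coincides with that of $M$ (for SEM-UR, up to relabeling latent variables). *)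

From HB Require Import structures.
From mathcomp Require Import all_boot all_order all_algebra.
From mathcomp Require Import fingroup perm.
Set Implicit Arguments.
Unset Strict Implicit.
Unset Printing Implicit Defensive.
Import Order.TTheory GRing.Theory Num.Theory.
Local Open Scope ring_scope.

(* Underlying variables V_1..V_p are indexed by 'I_p.  The weighted DAG is  *)
(* the matrix C with  C i j = c_ij  = weight of the edge V_j -> V_i         *)
(* (edge present iff c_ij <> 0).  Zs is the set of unobserved variables Z.  *)
Section SEM_ME.
Variables (R : fieldType) (p : nat).
Implicit Types (C : 'M[R]_p) (Zs : {set 'I_p}).

Definition me_edge C : rel 'I_p := fun a b => C b a != 0.

Definition me_desc C (a b : 'I_p) : bool :=
  [exists k, me_edge C a k && connect (me_edge C) k b].

Definition me_dag C : Prop := forall i, ~~ me_desc C i i.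

(* total causal effect of V_a on V_b: sum over directed paths a ~> b of the
   products of edge weights.  (C ^+ k) b a is the sum over directed walks of
   length k from a to b of the weight products; in a DAG walks are paths and
   have length < p; k = 0 gives 1 iff a = b. *)
Definition me_total_effect C (a b : 'I_p) : R := \sum_(k < p) (C ^+ k) b a.

Definition me_uleaf C Zs : {set 'I_p} := [set i in Zs | [forall k, C k i == 0]].
Definition me_nuleaf C Zs : {set 'I_p} := ~: me_uleaf C Zs.

(* mixing matrix W^ME: entry (V_v, N_{V_j}) for j a nu-leaf node
   (columns are only meaningful for j \in me_nuleaf C Zs) *)
Definition me_mix C (v j : 'I_p) : R := me_total_effect C j v.

Definition me_faithful C : Prop :=
  forall a b, me_desc C a b -> me_total_effect C a b != 0.

Definition me_mix_equiv Zs C1 C2 : Prop :=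
  exists (s : 'I_p -> 'I_p) (lam : 'I_p -> R),
    [/\ {in me_nuleaf C1 Zs &, injective s},
        s @: me_nuleaf C1 Zs = me_nuleaf C2 Zs &
        forall j, j \in me_nuleaf C1 Zs ->
          lam j != 0 /\ forall v, me_mix C2 v (s j) = lam j * me_mix C1 v j].

(* u-leaf node z is put into the group of its parent v: z has no other
   parents, or all its other parents are ancestors of v *)
Definition me_attach C Zs (z v : 'I_p) : bool :=
  [&& z \in me_uleaf C Zs, C z v != 0 &
      [forall w, ((C z w != 0) && (w != v)) ==> me_desc C w v]].

Definition me_aog C Zs : {set {set 'I_p}} :=
  [set v |: [set z | me_attach C Zs z v] | v in me_nuleaf C Zs]
  :|: [set [set z] | z in [set z in me_uleaf C Zs | [forall v, ~~ me_attach C Zs z v]]].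

(* C' is in the AOG equivalence class of C (same underlying variables and
   same set Zs of unobserved variables) *)
Definition me_aog_class Zs C C' : Prop :=
  [/\ me_dag C', me_mix_equiv Zs C C' & me_aog C' Zs = me_aog C Zs].

End SEM_ME.

(* Linear SEM-UR:  H = N_H,  X = B H + A X + N_X, A strictly lower          *)
(* triangular; h latent variables 'I_h, n observed variables 'I_n.          *)
Section SEM_UR.
Variables (R : fieldType) (h n : nat).
Implicit Types (B : 'M[R]_(n, h)) (A : 'M[R]_n).

Definition ur_sltri A : Prop := forall j k : 'I_n, A j k != 0 -> (k < j)%N.

Definition ur_edge A : rel 'I_n := fun k j => A j k != 0.

Definition ur_descX A (k j : 'I_n) : bool :=
  [exists l, ur_edge A k l && connect (ur_edge A) l j].

Definition ur_descH B A (i : 'I_h) (j : 'I_n) : bool :=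
  [exists l, (B l i != 0) && connect (ur_edge A) l j].

Definition ur_teX A (k j : 'I_n) : R := \sum_(m < n) (A ^+ m) j k.
Definition ur_teH B A (i : 'I_h) (j : 'I_n) : R :=
  \sum_(l < n) ur_teX A l j * B l i.

Definition ur_faithful B A : Prop :=
  (forall k j, ur_descX A k j -> ur_teX A k j != 0) /\
  (forall i j, ur_descH B A i j -> ur_teH B A i j != 0).

Definition ur_mix B A : 'M[R]_(n, h + n) :=
  row_mx (invmx (1%:M - A) *m B) (invmx (1%:M - A)).

Definition ur_mix_equiv (W1 W2 : 'M[R]_(n, h + n)) : Prop :=
  exists (s : 'S_(h + n)) (lam : 'I_(h + n) -> R),
    (forall c, lam c != 0) /\ forall r c, W2 r (s c) = lam c * W1 r c.

Definition ur_node := ('I_h + 'I_n)%type.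

(* latent H_i goes into the group of its child X_x *)
Definition ur_attach B A (i : 'I_h) (x : 'I_n) : bool :=
  (B x i != 0) && [forall k, ((B k i != 0) && (k != x)) ==> ur_descX A x k].

Definition ur_aog B A : {set {set ur_node}} :=
  [set (@inr 'I_h 'I_n x |: [set @inl 'I_h 'I_n i | i in [set i | ur_attach B A i x]])
     | x : 'I_n]
  :|: [set [set @inl 'I_h 'I_n i] | i in [set i | [forall x, ~~ ur_attach B A i x]]].

Definition ur_relabel (pi : {perm 'I_h}) (u : ur_node) : ur_node :=
  match u with inl i => inl (pi i) | inr x => inr x end.

Definition ur_aog_class B A B' A' : Prop :=
  [/\ ur_sltri A', ur_mix_equiv (ur_mix B A) (ur_mix B' A') &
      exists pi : {perm 'I_h},
        [set ur_relabel pi @: S | S : {set ur_node} in ur_aog B' A'] = ur_aog B A].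

End SEM_UR.

From HB Require Import structures.
From mathcomp Require Import all_boot all_order all_algebra.
From mathcomp Require Import fingroup perm.
Set Implicit Arguments.
Unset Strict Implicit.
Unset Printing Implicit Defensive.
Import Order.TTheory GRing.Theory Num.Theory.

(* Both kinds of models have total-effect matrix (1 - C)^-1 = \sum_k C^k, and under
   faithfulness the mixing column of the noise term of a variable j is supported exactly
   by the descendants of j (j included).  Equivalent mixing matrices thus share these
   supports column by column, through the matching s of noise terms, and everything
   hinges on order reflection: if s j reaches y in the second model, then j reaches y
   in the first one.  Order reflection yields faithfulness of the second model; and since
   AOG groups are the classes of variables with the same nu-leaf ancestors (SEM-ME),
   resp. the latent columns with the support of an observed column (SEM-UR), it also
   makes the two AOG partitions agree.  Conversely, order reflection follows from
   faithfulness of the second model, and also from equality of the AOG partitions: for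
   SEM-ME the nu-leaf groups of both models coincide, which forces j and s j to have the
   same nu-leaf ancestors; for SEM-UR the groups count the latents attached to each X_k,
   and counting the columns supported by the descendants of X_k shows that s sends the
   noise column of X_k to one of them. *)

Local Open Scope ring_scope.

Lemma measure_ind (T : Type) (f : T -> nat) (P : T -> Prop) :
  (forall x, (forall y, (f y < f x)%N -> P y) -> P x) -> forall x, P x.
Proof.
move=> IH x; have [n] := ubnP (f x); elim: n x => [//|n IHn] x fx.
by apply: IH => y fy; apply: IHn; apply: leq_trans fy _.
Qed.
Arguments measure_ind {T} f [P].

Lemma sumr_nz_term (R : nmodType) (I : finType) (F : I -> R) :
  \sum_i F i != 0 -> exists i, F i != 0.
Proof.
have [/existsP//|/existsPn allF0] := boolP [exists i, F i != 0].
by rewrite big1 ?eqxx // => i _; apply/eqP/negbNE.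
Qed.

Lemma sumr0_other_nz_term (R : nmodType) (I : finType) (F : I -> R) j :
  F j != 0 -> \sum_i F i = 0 -> exists2 i, i != j & F i != 0.
Proof.
move=> Fj sumF0.
have [/exists_inP[i]|/exists_inPn otherF0] := boolP [exists i in predC1 j, F i != 0].
  by exists i.
move: Fj; rewrite (bigD1 j) //= big1 ?addr0 in sumF0; first by rewrite sumF0 eqxx.
by move=> i ij; apply/eqP/negbNE/otherF0.
Qed.

Lemma imset_inj_in (aT rT : finType) (f : aT -> rT) (D X Y : {set aT}) :
  {in D &, injective f} -> X \subset D -> Y \subset D -> f @: X = f @: Y -> X = Y.
Proof.
move=> f_inj sXD sYD fXY.
suff sub (X1 Y1 : {set aT}) : X1 \subset D -> Y1 \subset D -> f @: X1 = f @: Y1 ->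
  X1 \subset Y1 by apply/eqP; rewrite eqEsubset (sub X Y) // (sub Y X).
move=> sX1D sY1D fX1Y1; apply/subsetP=> x xX1.
have /imsetP[y yY1 fxy] : f x \in f @: Y1 by rewrite -fX1Y1 imset_f.
by rewrite (f_inj x y (subsetP sX1D x xX1) (subsetP sY1D y yY1) fxy).
Qed.

Lemma perm_imset_eq (T : finType) (pi : {perm T}) (X Y : {set T}) :
  (forall i, (pi i \in Y) = (i \in X)) -> pi @: X = Y.
Proof.
move=> piXY; apply/setP=> y; apply/imsetP/idP=> [[x xX ->]|yY]; first by rewrite piXY.
by exists ((pi^-1)%g y); rewrite -?piXY permKV.
Qed.

Lemma lshift_or_rshift h n (c : 'I_(h + n)) :
  (exists i, c = lshift n i) \/ (exists k, c = rshift h k).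
Proof. by rewrite -(splitK c); case: (split c) => [i|k]; [left; exists i | right; exists k]. Qed.

Lemma split_lshift h n (i : 'I_h) : split (lshift n i) = inl i.
Proof. exact: (@unsplitK h n (inl i)). Qed.

Lemma split_rshift h n (k : 'I_n) : split (rshift h k) = inr k.
Proof. exact: (@unsplitK h n (inr k)). Qed.

Lemma card_rshift_lshift h n (k : 'I_n) (X : {set 'I_h}) :
  #|rshift h k |: lshift n @: X| = #|X|.+1.
Proof.
rewrite cardsU1 card_imset; last exact: lshift_inj.
by case: imsetP => // -[i _ /eqP]; rewrite eq_sym eq_lrshift.
Qed.

Section Reachability.
Variables (T : finType) (e : rel T).

Definition desc (a b : T) : bool := [exists k, e a k && connect e k b].

Lemma desc_connect a b : desc a b -> connect e a b.
Proof. by case/existsP=> k /andP[eak ckb]; apply: connect_trans (connect1 eak) ckb. Qed.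

Lemma connect_desc a b : connect e a b -> a != b -> desc a b.
Proof.
case/connectP=> [[|x q]] /= => [_ -> | /andP[eax qx] -> _]; first by rewrite eqxx.
by apply/existsP; exists x; rewrite eax; apply/connectP; exists q.
Qed.

Lemma desc_connect_trans a b c : desc a b -> connect e b c -> desc a c.
Proof.
case/existsP=> k /andP[eak ckb] cbc; apply/existsP; exists k.
by rewrite eak (connect_trans ckb cbc).
Qed.

Lemma connect_lastP a b : connect e a b -> a != b -> exists2 w, connect e a w & e w b.
Proof.
case/connectP=> q; elim/last_ind: q => [/= _ -> | q x _]; first by rewrite eqxx.
rewrite rcons_path last_rcons => /andP[aq ex] -> _.
by exists (last a q) => //; apply/connectP; exists q.
Qed.

Lemma connect_ind (P : T -> Prop) a b :
  (forall x y, e x y -> P x -> P y) -> P a -> connect e a b -> P b.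
Proof.
move=> Pe Pa /connectP[q eq ->]; elim: q a Pa eq => [|x q IHq] a Pa //=.
by case/andP=> eax qx; apply: IHq (Pe _ _ eax Pa) qx.
Qed.

Hypothesis acyclic : forall x, ~~ desc x x.

Lemma connect_antisym a b : connect e a b -> connect e b a -> a = b.
Proof.
move=> cab cba; apply/eqP; apply: contraT => nab.
by have := acyclic a; rewrite (desc_connect_trans (connect_desc cab nab) cba).
Qed.

Definition ancestors (b : T) : {set T} := [set u | desc u b].
Definition descendants (a : T) : {set T} := [set u | desc a u].

Lemma card_ancestors_edge a b : e a b -> (#|ancestors a| < #|ancestors b|)%N.
Proof.
move=> eab; apply: proper_card; apply/properP; split.
  by apply/subsetP=> u; rewrite !inE => dua; apply: desc_connect_trans dua (connect1 eab).
by exists a; rewrite !inE ?acyclic //; apply/existsP; exists b; rewrite eab connect0.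
Qed.

Lemma card_ancestors_lt b : (#|ancestors b| < #|T|)%N.
Proof.
apply: proper_card; apply/properP; split; first exact: subset_predT.
by exists b; rewrite // inE acyclic.
Qed.

Lemma card_descendants_desc a b : desc a b -> (#|descendants b| < #|descendants a|)%N.
Proof.
move=> dab; apply: proper_card; apply/properP; split.
  apply/subsetP=> u; rewrite !inE => dbu.
  exact: desc_connect_trans dab (desc_connect dbu).
by exists b; rewrite !inE ?acyclic.
Qed.

(* A point moved by [f] has a proper descendant [f x], which is fixed by induction
   on the number of descendants; injectivity then forces [f x = x]. *)
Lemma extensive_inj_in_id (S : {set T}) (f : T -> T) :
  {in S &, injective f} -> {in S, forall x, f x \in S} ->
  {in S, forall x, connect e x (f x)} -> {in S, forall x, f x = x}.
Proof.
move=> f_inj fS f_ext x.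
elim/(measure_ind (fun x => #|descendants x|)): x => x IHx xS.
apply/eqP; apply: contraT => fx_x.
have dx : desc x (f x) by rewrite connect_desc ?f_ext // eq_sym.
have ffx := IHx _ (card_descendants_desc dx) (fS x xS).
by case/eqP: fx_x; apply: f_inj; rewrite ?fS ?ffx.
Qed.

End Reachability.

Section EffectMatrix.
Variables (R : fieldType) (p : nat) (C : 'M[R]_p).

Definition mx_edge : rel 'I_p := fun a b => C b a != 0.

Definition effect_mx : 'M[R]_p := \sum_(k < p) C ^+ k.

Lemma mulmx_entry (M N : 'M[R]_p) i j : (M * N) i j = \sum_k M i k * N k j.
Proof. by rewrite -mulmxE mxE. Qed.

Lemma expmx_connect k a b : (C ^+ k) b a != 0 -> connect mx_edge a b.
Proof.
elim: k b => [|k IHk] b.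
  by rewrite expr0 -idmxE mxE; have [->|] := eqVneq b a; rewrite ?connect0 ?eqxx.
rewrite exprS mulmx_entry => /sumr_nz_term[l]; rewrite mulf_eq0 negb_or.
by case/andP=> Cbl Cla; apply: connect_trans (IHk _ Cla) (connect1 (Cbl : mx_edge l b)).
Qed.

Lemma effect_connect a b : effect_mx b a != 0 -> connect mx_edge a b.
Proof. by rewrite summxE => /sumr_nz_term[k]; apply: expmx_connect. Qed.

Hypothesis acyclic : forall x, ~~ desc mx_edge x x.

Lemma expmx_ancestors k a b : (C ^+ k) b a != 0 ->
  (k + #|ancestors mx_edge a| <= #|ancestors mx_edge b|)%N.
Proof.
elim: k b => [|k IHk] b.
  by rewrite expr0 -idmxE mxE; have [->|] := eqVneq b a; rewrite ?eqxx.
rewrite exprS mulmx_entry => /sumr_nz_term[l]; rewrite mulf_eq0 negb_or.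
case/andP=> Cbl /IHk le_la; rewrite addSn.
exact: leq_ltn_trans le_la (card_ancestors_edge acyclic (Cbl : mx_edge l b)).
Qed.

(* Walks have fewer than [p] edges, since each edge enlarges the ancestor set. *)
Lemma expmx_order : C ^+ p = 0.
Proof.
apply/matrixP=> b a; rewrite mxE; apply/eqP/negbNE/negP => /expmx_ancestors.
have := card_ancestors_lt acyclic b; rewrite card_ord => lt_b /(leq_ltn_trans)/(_ lt_b).
by rewrite ltnNge leq_addr.
Qed.

Lemma effect_mx_expand : effect_mx = 1 + C * effect_mx.
Proof.
rewrite /effect_mx; case: p C expmx_order => [|q] D Dq; first by apply/matrixP=> [[]].
rewrite mulr_sumr big_ord_recl expr0 big_ord_recr /= -exprS Dq addr0.
by congr (_ + _); apply: eq_bigr => i _; rewrite -exprS.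
Qed.

Lemma effect_mx_rowE b a :
  effect_mx b a = (b == a)%:R + \sum_l C b l * effect_mx l a.
Proof. by rewrite {1}effect_mx_expand mxE -idmxE mxE mulmx_entry. Qed.

Lemma effect_mx_diag a : effect_mx a a = 1.
Proof.
rewrite effect_mx_rowE eqxx big1 ?addr0 // => l _; apply/eqP; rewrite mulf_eq0.
apply: contraT; rewrite negb_or => /andP[Cal /effect_connect cal].
by case/negP: (acyclic l); apply/existsP; exists a; apply/andP.
Qed.
Lemma edge_irrefl a : C a a == 0.
Proof.
apply: contraT => Caa; case/negP: (acyclic a).
by apply/existsP; exists a; rewrite connect0 andbT.
Qed.

(* An edge [w -> y] whose total effect vanishes is cancelled by another path
   [w ~> w' -> y]. *)
Lemma effect_edge_cancel y w : C y w != 0 -> effect_mx y w = 0 ->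
  exists2 w', w' != w & (effect_mx w' w != 0) && (C y w' != 0).
Proof.
move=> Cyw; have yw : y != w by apply: contraNneq Cyw => ->; rewrite edge_irrefl.
rewrite effect_mx_rowE (negPf yw) add0r => sum0.
have [|w' w'w] := sumr0_other_nz_term (j := w) _ sum0; first by rewrite effect_mx_diag mulr1.
by rewrite mulf_eq0 negb_or andbC; exists w'.
Qed.

Lemma effect_mulmx_cancel h (M : 'M[R]_(p, h)) l i : M l i != 0 ->
  (effect_mx *m M) l i = 0 -> exists2 l', l' != l & (effect_mx l l' != 0) && (M l' i != 0).
Proof.
move=> Mli; rewrite mxE => sum0.
have [|l' l'l] := sumr0_other_nz_term (j := l) _ sum0; first by rewrite effect_mx_diag mul1r.
by rewrite mulf_eq0 negb_or; exists l'.
Qed.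

End EffectMatrix.

Section MEGroups.
Variables (R : fieldType) (p : nat) (Zs : {set 'I_p}) (C : 'M[R]_p).
Hypothesis dag : me_dag C.

Local Notation le := (connect (mx_edge C)).
Local Notation N := (me_nuleaf C Zs).
Local Notation U := (me_uleaf C Zs).

Lemma me_total_effectE a b : me_total_effect C a b = effect_mx C b a.
Proof. by rewrite /me_total_effect summxE. Qed.

Lemma effect_mx_neq0 : me_faithful C -> forall y k, (effect_mx C y k != 0) = le k y.
Proof.
move=> fa y k; apply/idP/idP; first exact: effect_connect.
have [->|nky] := eqVneq k y; first by rewrite effect_mx_diag ?oner_eq0.
by move=> cky; have := fa k y (connect_desc cky nky); rewrite me_total_effectE.
Qed.

Lemma nuleaf_edge a l : C l a != 0 -> a \in N.
Proof. by move=> Cla; rewrite !inE negb_and; apply/orP; right; apply/forallPn; exists l. Qed.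

Lemma nuleaf_desc a b : desc (mx_edge C) a b -> a \in N.
Proof. by case/existsP=> k /andP[/nuleaf_edge]. Qed.

Lemma uleafE a : (a \in U) = (a \notin N).
Proof. by rewrite in_setC negbK. Qed.

Definition nu_ancestors (y : 'I_p) : {set 'I_p} := [set k in N | le k y].

Lemma mem_nu_ancestors k y : (k \in nu_ancestors y) = (k \in N) && le k y.
Proof. by rewrite inE. Qed.

Lemma nu_ancestors_inj : {in N &, injective nu_ancestors}.
Proof.
move=> v w vN wN Avw; apply: (connect_antisym dag).
  by move/setP/(_ v): Avw; rewrite !mem_nu_ancestors vN connect0 /= => <-.
by move/setP/(_ w): Avw; rewrite !mem_nu_ancestors wN connect0 /= => ->.
Qed.

Lemma me_attachE z v :
  me_attach C Zs z v = [&& z \in U, v \in N & nu_ancestors z == nu_ancestors v].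
Proof.
rewrite /me_attach; apply/andP/and3P.
  case=> zU /andP[Czv /forallP other_anc]; have vN := nuleaf_edge Czv.
  split=> //; apply/eqP/setP=> k; rewrite !mem_nu_ancestors; case kN: (k \in N) => //=.
  apply/idP/idP=> [kz|kv]; last exact: connect_trans kv (connect1 Czv).
  have nkz : k != z by apply: contraTneq kN => ->; rewrite -uleafE.
  have [w kw Czw] := connect_lastP kz nkz; have [<- //|wv] := eqVneq w v.
  by have := other_anc w; rewrite [C z w != 0]Czw wv => /desc_connect; apply: connect_trans.
case=> zU vN /eqP Azv; split=> //.
have vz : le v z by move/setP/(_ v): (Azv); rewrite !mem_nu_ancestors vN connect0 /= => ->.
have nvz : v != z by apply: contraTneq vN => ->; rewrite -uleafE.
have [w vw Czw] := connect_lastP vz nvz; have wN := nuleaf_edge Czw.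
have wv : le w v by move/setP/(_ w): (Azv); rewrite !mem_nu_ancestors wN (connect1 Czw).
rewrite -(connect_antisym dag wv vw) [C z w != 0]Czw /=.
apply/forallP=> w'; apply/implyP=> /andP[Czw' nw'].
move/setP/(_ w'): (Azv); rewrite !mem_nu_ancestors (nuleaf_edge Czw') (connect1 Czw') /= => w'v.
by apply: connect_desc; rewrite // (connect_antisym dag wv vw).
Qed.

Definition me_group (v : 'I_p) : {set 'I_p} := v |: [set z | me_attach C Zs z v].

Lemma mem_me_group v y : v \in N -> (y \in me_group v) = (nu_ancestors y == nu_ancestors v).
Proof.
move=> vN; rewrite !inE me_attachE vN /=; have [->|nyv] := eqVneq y v; first by rewrite eqxx.
rewrite uleafE; case yN: (y \in N) => //=; apply/esym/negbTE.
by apply: contra nyv => /eqP/nu_ancestors_inj-> //.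
Qed.

Lemma me_group_inj : {in N &, injective me_group}.
Proof.
move=> v w vN wN Gvw; apply: nu_ancestors_inj => //; apply/eqP.
by rewrite -mem_me_group // -Gvw setU11.
Qed.

Lemma me_aogE : me_aog C Zs = [set me_group v | v in N] :|:
  [set [set z] | z in [set z | [forall v in N, nu_ancestors z != nu_ancestors v]]].
Proof.
rewrite /me_aog; congr (_ :|: _).
suff -> : [set z in U | [forall v, ~~ me_attach C Zs z v]] =
  [set z | [forall v in N, nu_ancestors z != nu_ancestors v]] by [].
apply/setP=> z; rewrite in_set [in RHS]in_set.
apply/andP/forall_inP=> [[zU /forallP unattached] v vN | separate].
  by apply: contraNneq (unattached v) => Azv; rewrite me_attachE zU vN Azv eqxx.
split; first by rewrite uleafE; apply/negP=> zN; have := separate z zN; rewrite eqxx.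
by apply/forallP=> v; rewrite me_attachE; apply/and3P=> -[_ vN]; apply/negP: (separate v vN).
Qed.

End MEGroups.

Section MEMixEquiv.
Variables (R : fieldType) (p : nat) (Zs : {set 'I_p}) (C C' : 'M[R]_p).
Hypotheses (dag : me_dag C) (fa : me_faithful C) (dag' : me_dag C').
Variables (s : 'I_p -> 'I_p) (lam : 'I_p -> R).

Local Notation le := (connect (mx_edge C)).
Local Notation le' := (connect (mx_edge C')).
Local Notation N := (me_nuleaf C Zs).
Local Notation N' := (me_nuleaf C' Zs).
Local Notation A := (nu_ancestors Zs C).
Local Notation A' := (nu_ancestors Zs C').

Hypotheses (s_inj : {in N &, injective s}) (s_onto : s @: N = N')
  (s_mix : forall j, j \in N ->
     lam j != 0 /\ forall v, me_mix C' v (s j) = lam j * me_mix C v j).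

Lemma nuleaf_map j : j \in N -> s j \in N'.
Proof. by move=> jN; rewrite -s_onto imset_f. Qed.

Lemma nuleaf_preimage w : w \in N' -> exists2 j, j \in N & w = s j.
Proof. by rewrite -s_onto => /imsetP. Qed.

Lemma effect_map_neq0 j y : j \in N -> (effect_mx C' y (s j) != 0) = le j y.
Proof.
case/s_mix=> lam_nz /(_ y); rewrite /me_mix !me_total_effectE => ->.
by rewrite mulf_eq0 negb_or lam_nz effect_mx_neq0.
Qed.

Lemma connect_map j y : j \in N -> le j y -> le' (s j) y.
Proof. by move=> jN; rewrite -effect_map_neq0 //; apply: effect_connect. Qed.

Lemma connect_to_map j : j \in N -> le j (s j).
Proof. by move=> jN; rewrite -effect_map_neq0 // effect_mx_diag ?oner_eq0. Qed.

Lemma connect_from_map j : j \in N -> le' (s j) j.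
Proof.
case/s_mix=> lam_nz /(_ j) mix_j; apply: effect_connect.
by move: mix_j; rewrite /me_mix !me_total_effectE => ->; rewrite effect_mx_diag // mulr1.
Qed.

Section OrderReflecting.
Hypothesis connect_of_map : forall k y, k \in N -> le' (s k) y -> le k y.

Lemma nu_ancestors'E y : A' y = s @: A y.
Proof.
apply/setP=> w; rewrite mem_nu_ancestors; apply/idP/imsetP=> [|[k]].
  case/andP=> /nuleaf_preimage[k kN ->] /(connect_of_map kN) ky.
  by exists k; rewrite // mem_nu_ancestors kN.
by rewrite mem_nu_ancestors => /andP[kN ky] ->; rewrite nuleaf_map ?connect_map.
Qed.

Lemma nu_ancestors_map v : v \in N -> A (s v) = A v.
Proof.
move=> vN; apply/setP=> k; rewrite !mem_nu_ancestors; case: (boolP (k \in N)) => //= kN.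
apply/idP/idP=> [ksv|kv]; last exact: connect_trans kv (connect_to_map vN).
by apply: connect_of_map => //; apply: connect_trans (connect_map _ ksv) (connect_from_map vN).
Qed.

Lemma me_faithful_map : me_faithful C'.
Proof.
move=> a b /[dup] /(nuleaf_desc Zs) /nuleaf_preimage[j jN ->] /desc_connect sjb.
by rewrite me_total_effectE effect_map_neq0 // connect_of_map.
Qed.

Lemma nu_ancestors_sub y : A y \subset N.
Proof. by apply/subsetP=> k; rewrite mem_nu_ancestors => /andP[]. Qed.

Lemma me_group'_map v : v \in N -> me_group Zs C' (s v) = me_group Zs C v.
Proof.
move=> vN; apply/setP=> y; rewrite (mem_me_group dag' y (nuleaf_map vN)) (mem_me_group dag y vN).
rewrite !nu_ancestors'E nu_ancestors_map //; apply/eqP/eqP=> [|-> //].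
exact/imset_inj_in/nu_ancestors_sub/nu_ancestors_sub.
Qed.

Lemma me_aog_map : me_aog C' Zs = me_aog C Zs.
Proof.
rewrite (me_aogE Zs dag') (me_aogE Zs dag); congr (_ :|: _).
  by rewrite -s_onto -imset_comp; apply: eq_in_imset => v /me_group'_map.
suff -> : [set z | [forall v in N', A' z != A' v]] = [set z | [forall v in N, A z != A v]] by [].
apply/setP=> z; rewrite !inE; apply/forall_inP/forall_inP=> separate v vN.
  apply: contra (separate _ (nuleaf_map vN)) => /eqP Azv.
  by rewrite !nu_ancestors'E nu_ancestors_map // Azv.
have [k kN ->] := nuleaf_preimage vN; rewrite !nu_ancestors'E nu_ancestors_map //.
apply: contra (separate k kN) => /eqP.
by move/(imset_inj_in s_inj (nu_ancestors_sub _) (nu_ancestors_sub _))->.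
Qed.

End OrderReflecting.

Lemma connect_of_map_faithful : me_faithful C' ->
  forall k y, k \in N -> le' (s k) y -> le k y.
Proof. by move=> fa' k y kN; rewrite -effect_map_neq0 // effect_mx_neq0. Qed.

Lemma edge'_lift y w : C' y w != 0 -> exists2 k, k \in N & le k y && le' w (s k).
Proof.
elim/(measure_ind (fun w => #|descendants (mx_edge C') w|)): w => w IHw Cyw.
have [k kN wk] := nuleaf_preimage (nuleaf_edge Zs Cyw).
have [|/negbNE/eqP] := boolP (effect_mx C' y w != 0).
  by rewrite wk effect_map_neq0 // => ky; exists k; rewrite ?ky ?connect0.
case/(effect_edge_cancel dag' Cyw)=> w' w'w /andP[/effect_connect ww' /IHw[|k' k'N]].
  by apply: (card_descendants_desc dag'); rewrite connect_desc // eq_sym.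
by case/andP=> k'y w'k'; exists k'; rewrite // k'y (connect_trans ww' w'k').
Qed.

Lemma edge'_to_nuleaf x w : x \in N -> C' x w != 0 -> le' w (s x).
Proof.
move=> xN /edge'_lift[k kN /andP[kx wk]]; apply: connect_trans wk _.
by apply: connect_map => //; apply: connect_trans kx (connect_to_map xN).
Qed.

Lemma nu_ancestors'_uleaf' x : x \in N -> x \notin N' -> A' x = A' (s x).
Proof.
move=> xN xN'; apply/setP=> w; rewrite !mem_nu_ancestors.
case: (boolP (w \in N')) => //= wN'; apply/idP/idP=> [wx|]; last first.
  by move/connect_trans; apply; apply: connect_from_map.
have [|q wq Cxq] := connect_lastP wx; first by apply: contraNneq xN' => <-.
exact: connect_trans wq (edge'_to_nuleaf xN Cxq).
Qed.

Section AogEquiv.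
Hypothesis aog_eq : me_aog C' Zs = me_aog C Zs.

Local Notation G := (me_group Zs C).
Local Notation G' := (me_group Zs C').

Lemma me_group_mem_aog' v : v \in N -> G v \in [set G' w | w in N'].
Proof.
move=> vN; have : G v \in me_aog C' Zs.
  by rewrite aog_eq (me_aogE Zs dag) inE imset_f.
rewrite (me_aogE Zs dag') => /setUP[//|/imsetP[z]].
rewrite inE => /forall_inP separate Gvz.
have /set1P vz : v \in [set z] by rewrite -Gvz setU11.
rewrite -{}vz in separate; case: (boolP (v \in N')) => [vN'|vN'].
  by have := separate v vN'; rewrite eqxx.
by have := separate _ (nuleaf_map vN); rewrite nu_ancestors'_uleaf' ?eqxx.
Qed.

Lemma nu_groups_eq : [set G v | v in N] = [set G' w | w in N'].
Proof.
apply/eqP; rewrite eqEcard; apply/andP; split.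
  by apply/subsetP=> _ /imsetP[v vN ->]; apply: me_group_mem_aog'.
rewrite !card_in_imset; try exact: me_group_inj.
by rewrite -s_onto card_in_imset.
Qed.

(* Matching of nu-leaves through their groups; being extensive and injective, it is
   the identity. *)
Definition group_match (m : 'I_p) : 'I_p := odflt m [pick v in N | G' (s m) == G v].

Lemma group_matchP m : m \in N -> group_match m \in N /\ G' (s m) = G (group_match m).
Proof.
move=> mN; have : G' (s m) \in [set G v | v in N] by rewrite nu_groups_eq imset_f ?nuleaf_map.
case/imsetP=> v vN Gsv; rewrite /group_match; case: pickP => [u /andP[uN /eqP]|] //=.
by move/(_ v); rewrite vN Gsv eqxx.
Qed.

Lemma group_match_id : {in N, forall m, group_match m = m}.
Proof.
apply: (extensive_inj_in_id dag (S := N)) => [m1 m2 m1N m2N eq_m12||m mN].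
- have [_ G1] := group_matchP m1N; have [_ G2] := group_matchP m2N.
  apply: s_inj => //; apply: (me_group_inj dag' (nuleaf_map m1N) (nuleaf_map m2N)).
  by rewrite G1 G2 eq_m12.
- by move=> m /group_matchP[].
have [vN Gsv] := group_matchP mN.
have : s m \in G (group_match m) by rewrite -Gsv setU11.
rewrite mem_me_group // => /eqP/setP/(_ m).
by rewrite !mem_nu_ancestors mN connect_to_map //= => /esym.
Qed.

Lemma nu_ancestors_map_aog m : m \in N -> A (s m) = A m.
Proof.
move=> mN; have [_] := group_matchP mN; rewrite group_match_id // => Gsm.
by apply/eqP; rewrite -mem_me_group // -Gsm setU11.
Qed.

Lemma edge'_from_map k y : k \in N -> C' y (s k) != 0 -> le k y.
Proof.
elim/(measure_ind (fun k => #|descendants (mx_edge C) k|)): k => k IHk kN Cy.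
have [|/negbNE/eqP] := boolP (effect_mx C' y (s k) != 0); first by rewrite effect_map_neq0.
case/(effect_edge_cancel dag' Cy)=> w wk /andP[Tw Cyw].
have [k' k'N wk'] := nuleaf_preimage (nuleaf_edge Zs Cyw); rewrite {w}wk' in wk Tw Cyw.
move: Tw; rewrite effect_map_neq0 // => ksk'.
have : k \in A k' by rewrite -nu_ancestors_map_aog // mem_nu_ancestors kN.
rewrite mem_nu_ancestors => /andP[_ kk'].
have nkk' : k != k' by apply: contraNneq wk => ->.
exact: connect_trans kk' (IHk _ (card_descendants_desc dag (connect_desc kk' nkk')) k'N Cyw).
Qed.

Lemma connect_of_map_aog k y : k \in N -> le' (s k) y -> le k y.
Proof.
move=> kN; apply: (@connect_ind _ _ (fun u => le k u)) => [x z Czx kx|]; last exact: connect_to_map.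
have [j jN xj] := nuleaf_preimage (nuleaf_edge Zs Czx); rewrite {x}xj in Czx kx.
have : k \in A j by rewrite -nu_ancestors_map_aog // mem_nu_ancestors kN.
rewrite mem_nu_ancestors => /andP[_ kj].
exact: connect_trans kj (edge'_from_map jN Czx).
Qed.

End AogEquiv.

End MEMixEquiv.

Lemma me_aog_class_faithful (R : fieldType) p (Zs : {set 'I_p}) (C C' : 'M[R]_p) :
  me_dag C -> me_faithful C -> me_aog_class Zs C C' -> me_faithful C'.
Proof.
move=> dag fa [dag' [s [lam [s_inj s_onto s_mix]]] aog_eq].
apply: (me_faithful_map dag fa s_onto s_mix) => k y.
exact: (connect_of_map_aog dag fa dag' s_inj s_onto s_mix aog_eq).
Qed.

Lemma me_aog_class_of_faithful (R : fieldType) p (Zs : {set 'I_p}) (C C' : 'M[R]_p) :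
  me_dag C -> me_faithful C -> me_dag C' -> me_mix_equiv Zs C C' -> me_faithful C' ->
  me_aog_class Zs C C'.
Proof.
move=> dag fa dag' mix fa'; split=> //; case: mix => s [lam [s_inj s_onto s_mix]].
apply: (me_aog_map dag fa dag' s_inj s_onto s_mix) => k y.
exact: (connect_of_map_faithful dag fa dag' s_mix fa').
Qed.

Section URColumns.
Variables (R : fieldType) (h n : nat) (B : 'M[R]_(n, h)) (A : 'M[R]_n).
Hypothesis sltri : ur_sltri A.

Local Notation le := (connect (mx_edge A)).

Lemma sltri_connect_leq k j : le k j -> (k <= j)%N.
Proof.
apply: (@connect_ind _ _ (fun u : 'I_n => (k <= u)%N)) => // x y /sltri xy kx.
exact: leq_trans kx (ltnW xy).
Qed.

Lemma sltri_desc_ltn k j : desc (mx_edge A) k j -> (k < j)%N.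
Proof. by case/existsP=> l /andP[/sltri kl /sltri_connect_leq]; apply: leq_trans. Qed.

Lemma sltri_acyclic x : ~~ desc (mx_edge A) x x.
Proof. by apply/negP=> /sltri_desc_ltn; rewrite ltnn. Qed.

Lemma ur_teXE k j : ur_teX A k j = effect_mx A j k.
Proof. by rewrite /ur_teX summxE. Qed.

Lemma ur_teHE i j : ur_teH B A i j = (effect_mx A *m B) j i.
Proof. by rewrite /ur_teH mxE; apply: eq_bigr => l _; rewrite ur_teXE. Qed.

Lemma invmx_1B_sltri : invmx (1%:M - A) = effect_mx A.
Proof.
have inv_r : (1%:M - A) *m effect_mx A = 1%:M.
  by rewrite mulmxBl mul1mx mulmxE {1}(effect_mx_expand sltri_acyclic) idmxE addrK.
have [unitB _] := mulmx1_unit inv_r.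
by rewrite -[RHS](mulKmx unitB) inv_r mulmx1.
Qed.

Lemma ur_mix_lshift y i : ur_mix B A y (lshift n i) = (effect_mx A *m B) y i.
Proof. by rewrite /ur_mix row_mxEl invmx_1B_sltri. Qed.

Lemma ur_mix_rshift y k : ur_mix B A y (rshift h k) = effect_mx A y k.
Proof. by rewrite /ur_mix row_mxEr invmx_1B_sltri. Qed.

Lemma effect_mulmx_source l i : B l i != 0 ->
  exists2 l', le l' l & (effect_mx A *m B) l' i != 0.
Proof.
elim/(measure_ind (@nat_of_ord n)): l => l IHl Bli.
have [|/negbNE/eqP] := boolP ((effect_mx A *m B) l i != 0); first by exists l.
case/(effect_mulmx_cancel sltri_acyclic Bli)=> l' l'l.
case/andP=> /effect_connect cl'l /IHl[|l'' l''l' Tl''].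
  by rewrite ltn_neqAle sltri_connect_leq // andbT; apply: contra l'l => /eqP/val_inj->.
by exists l''; rewrite // (connect_trans l''l' cl'l).
Qed.

Hypothesis fa : ur_faithful B A.

Lemma ur_effect_neq0 y k : (effect_mx A y k != 0) = le k y.
Proof.
apply/idP/idP; first exact: effect_connect.
have [->|nky] := eqVneq k y; first by rewrite effect_mx_diag ?oner_eq0 //; apply: sltri_acyclic.
by move=> cky; have := fa.1 k y (connect_desc cky nky); rewrite ur_teXE.
Qed.

Lemma ur_effectH_neq0 y i : ((effect_mx A *m B) y i != 0) = ur_descH B A i y.
Proof.
apply/idP/idP; last by rewrite -ur_teHE; apply: fa.2.
rewrite mxE => /sumr_nz_term[l]; rewrite mulf_eq0 negb_or => /andP[/effect_connect ly Bli].
by apply/existsP; exists l; rewrite Bli.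
Qed.

Definition upset k : {set 'I_n} := [set y | le k y].

Definition col_support (c : 'I_(h + n)) : {set 'I_n} := [set y | ur_mix B A y c != 0].

Lemma col_support_rshift k : col_support (rshift h k) = upset k.
Proof. by apply/setP=> y; rewrite !inE ur_mix_rshift ur_effect_neq0. Qed.

Lemma col_support_lshift i : col_support (lshift n i) = [set y | ur_descH B A i y].
Proof. by apply/setP=> y; rewrite !inE ur_mix_lshift ur_effectH_neq0. Qed.

Lemma col_support_connect c y y' : y \in col_support c -> le y y' -> y' \in col_support c.
Proof.
have [[i ->]|[k ->]] := lshift_or_rshift c.
  rewrite col_support_lshift !inE => /existsP[l /andP[Bli ly]] yy'.
  by apply/existsP; exists l; rewrite Bli (connect_trans ly yy').
by rewrite col_support_rshift !inE => ky; apply: connect_trans ky.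
Qed.

Lemma upset_inj : injective upset.
Proof.
move=> k m eq_km; apply: (connect_antisym sltri_acyclic).
  by move/setP/(_ m): eq_km; rewrite !inE connect0 => ->.
by move/setP/(_ k): eq_km; rewrite !inE connect0 => <-.
Qed.

Lemma ur_attachE i k : ur_attach B A i k = (col_support (lshift n i) == upset k).
Proof.
rewrite col_support_lshift /ur_attach; apply/andP/eqP=> [[Bki /forallP other_ch]|supp].
  apply/setP=> y; rewrite !inE; apply/existsP/idP=> [[l /andP[Bli ly]]|ky]; last first.
    by exists k; rewrite Bki.
  have [<- //|lk] := eqVneq l k.
  by have := other_ch l; rewrite Bli lk => /desc_connect/connect_trans; apply.
have in_upset l : B l i != 0 -> le k l.
  move=> Bli; move/setP/(_ l): supp; rewrite !inE => <-.
  by apply/existsP; exists l; rewrite Bli connect0.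
have /existsP[l /andP[Bli lk]] : ur_descH B A i k by move/setP/(_ k): supp; rewrite !inE connect0.
have lk' := connect_antisym sltri_acyclic lk (in_upset l Bli); rewrite -lk' Bli.
split=> //; apply/forallP=> l'; apply/implyP=> /andP[Bl'i nl'].
by apply: connect_desc; rewrite lk' ?in_upset // eq_sym -lk'.
Qed.

Definition attached k : {set 'I_h} := [set i | ur_attach B A i k].

Definition upset_cols k : {set 'I_(h + n)} := [set c | col_support c == upset k].

Lemma upset_colsE k : upset_cols k = rshift h k |: lshift n @: attached k.
Proof.
apply/setP=> c; rewrite !inE; have [[i ->]|[m ->]] := lshift_or_rshift c.
  rewrite eq_sym eq_lrshift /=; apply/eqP/imsetP => [supp|[i' Hi' /lshift_inj ->]].
    by exists i => //; rewrite inE ur_attachE supp.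
  by move: Hi'; rewrite inE ur_attachE => /eqP.
rewrite col_support_rshift eq_rshift; apply/eqP/orP=> [/upset_inj ->|]; first by left.
by case=> [/eqP-> //|/imsetP[i _ /eqP]]; rewrite eq_sym eq_lrshift.
Qed.

End URColumns.

Lemma ur_relabel_inj h n (pi : {perm 'I_h}) : injective (@ur_relabel h n pi).
Proof. by move=> [i|x] [j|y] //= [ij]; rewrite ?(perm_inj ij) ?ij. Qed.

Section URGroups.
Variables (R : fieldType) (h n : nat) (B : 'M[R]_(n, h)) (A : 'M[R]_n).

Definition ur_group (x : 'I_n) : {set ur_node h n} := inr x |: inl @: attached B A x.

Lemma card_ur_group x : #|ur_group x| = #|attached B A x|.+1.
Proof.
rewrite cardsU1 card_imset; last by move=> i j [].
by case: imsetP => // -[].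
Qed.

Lemma ur_group_aog x : ur_group x \in ur_aog B A.
Proof. by rewrite inE imset_f. Qed.

End URGroups.

Lemma card_attached_relabel (R : fieldType) h n (B B' : 'M[R]_(n, h)) (A A' : 'M[R]_n)
    (pi : {perm 'I_h}) :
  [set ur_relabel pi @: S | S : {set ur_node h n} in ur_aog B' A'] = ur_aog B A ->
  forall k, #|attached B A k| = #|attached B' A' k|.
Proof.
move=> aog_eq k; have := ur_group_aog B A k; rewrite -aog_eq => /imsetP[S S_aog' GS].
have kS : inr k \in ur_relabel pi @: S by rewrite -GS setU11.
have {kS} : inr k \in S by case/imsetP: kS => -[//|x] xS [->].
case/setUP: S_aog' GS => /imsetP[y _ ->] GS; last by rewrite inE.
case/setU1P=> [[ky]|/imsetP[//]]; rewrite -ky in GS.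
by apply: succn_inj; rewrite -!card_ur_group GS card_imset //; apply: ur_relabel_inj.
Qed.

Section URMixEquiv.
Variables (R : fieldType) (h n : nat) (B B' : 'M[R]_(n, h)) (A A' : 'M[R]_n).
Hypotheses (sltri : ur_sltri A) (fa : ur_faithful B A) (sltri' : ur_sltri A').
Variables (s : {perm 'I_(h + n)}) (lam : 'I_(h + n) -> R).
Hypotheses (lam_nz : forall c, lam c != 0)
           (s_mix : forall y c, ur_mix B' A' y (s c) = lam c * ur_mix B A y c).

Local Notation le := (connect (mx_edge A)).
Local Notation le' := (connect (mx_edge A')).

Lemma col_support_map c : col_support B' A' (s c) = col_support B A c.
Proof. by apply/setP=> y; rewrite !inE s_mix mulf_eq0 negb_or lam_nz. Qed.

Definition obs_preimage (k : 'I_n) : 'I_(h + n) := (s^-1)%g (rshift h k).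

Lemma effect'_neq0 k y : (effect_mx A' y k != 0) = (y \in col_support B A (obs_preimage k)).
Proof. by rewrite -col_support_map permKV inE ur_mix_rshift. Qed.

Lemma effect'_connect k y : le k y -> effect_mx A' y k != 0.
Proof.
rewrite effect'_neq0; apply: col_support_connect => //.
by rewrite -effect'_neq0 effect_mx_diag ?oner_eq0 //; apply: sltri_acyclic.
Qed.

Lemma connect'_of_connect k y : le k y -> le' k y.
Proof. by move/effect'_connect/effect_connect. Qed.

Definition lat_preimage (i : 'I_h) : 'I_(h + n) := (s^-1)%g (lshift n i).

Lemma effect'B'_neq0 i y :
  ((effect_mx A' *m B') y i != 0) = (y \in col_support B A (lat_preimage i)).
Proof. by rewrite -col_support_map permKV inE (ur_mix_lshift B' sltri'). Qed.

Lemma ur_attach'_of_upset i k : col_support B A (lat_preimage i) = upset A k ->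
  ur_attach B' A' i k.
Proof.
move=> supp; have eff'B' y : ((effect_mx A' *m B') y i != 0) = le k y.
  by rewrite effect'B'_neq0 supp inE.
have child_up l : B' l i != 0 -> le' k l.
  case/(effect_mulmx_source sltri')=> l' l'l; rewrite eff'B' => /connect'_of_connect.
  by move/connect_trans; apply.
have : (effect_mx A' *m B') k i != 0 by rewrite eff'B' connect0.
rewrite mxE => /sumr_nz_term[l]; rewrite mulf_eq0 negb_or => /andP[/effect_connect lk Bli].
have kl := connect_antisym (sltri_acyclic sltri') (child_up l Bli) lk.
rewrite -kl in Bli; rewrite /ur_attach Bli; apply/forallP=> l'; apply/implyP=> /andP[Bl'i l'k].
by apply: connect_desc; rewrite ?child_up // eq_sym.
Qed.

Section OrderReflecting.
Hypothesis connect_of_connect' : forall k y, le' k y -> le k y.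

Lemma ur_faithful_map : ur_faithful B' A'.
Proof.
split=> [k j /desc_connect/connect_of_connect' kj | i j /existsP[l /andP[B'li lj]]].
  by rewrite ur_teXE effect'_connect.
rewrite ur_teHE effect'B'_neq0; have [l' l'l] := effect_mulmx_source sltri' B'li.
rewrite effect'B'_neq0 => /col_support_connect; apply=> //.
by apply: connect_of_connect'; apply: connect_trans l'l lj.
Qed.

Lemma upset'E k : upset A' k = upset A k.
Proof.
by apply/setP=> y; rewrite !inE; apply/idP/idP=> [/connect_of_connect'|/connect'_of_connect].
Qed.

Lemma col_support_obs_preimage k : col_support B A (obs_preimage k) = upset A k.
Proof. by rewrite -col_support_map permKV (col_support_rshift sltri' ur_faithful_map) upset'E. Qed.

(* The column of [H_i] in the second model comes either from a latent column of
   the first one, or from the column of some [N_{X_k}]; in the latter case the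
   column of [N_{X_k}] in the second model comes from a latent column. *)
Definition latent_match (i : 'I_h) : 'I_h :=
  match split (lat_preimage i) with
  | inl j => j
  | inr k => if split (obs_preimage k) is inl j then j else i
  end.

Lemma latent_matchP i :
  lat_preimage i = lshift n (latent_match i) \/
  exists2 k, lat_preimage i = rshift h k & obs_preimage k = lshift n (latent_match i).
Proof.
rewrite /latent_match; have [[j ->]|[k ik]] := lshift_or_rshift (lat_preimage i).
  by left; rewrite split_lshift.
right; exists k; rewrite // ik split_rshift.
have [[j ->]|[m km]] := lshift_or_rshift (obs_preimage k); first by rewrite split_lshift.
have := col_support_obs_preimage k; rewrite km col_support_rshift // => /(upset_inj sltri) mk.
by exfalso; move: ik; rewrite -mk -km => /perm_inj/eqP; rewrite eq_lrshift.
Qed.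

Lemma col_support_latent_match i :
  col_support B A (lshift n (latent_match i)) = col_support B' A' (lshift n i).
Proof.
rewrite -[lshift n i](permKV s) col_support_map.
have [<- //|[k ik <-]] := latent_matchP i.
by rewrite col_support_obs_preimage -/(lat_preimage i) ik col_support_rshift.
Qed.

Lemma latent_match_inj : injective latent_match.
Proof.
move=> i1 i2 eq12; apply: (@lshift_inj h n); apply: (@perm_inj _ (s^-1)%g).
rewrite -/(lat_preimage i1) -/(lat_preimage i2).
have [E1|[k1 E1 F1]] := latent_matchP i1; have [E2|[k2 E2 F2]] := latent_matchP i2.
- by rewrite E1 E2 eq12.
- by move: E1; rewrite eq12 -F2 => /perm_inj/eqP; rewrite eq_lrshift.
- by move: F1; rewrite eq12 -E2 => /perm_inj/eqP; rewrite eq_sym eq_lrshift.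
by move: F1; rewrite eq12 -F2 E1 E2 => /perm_inj/rshift_inj->.
Qed.

Definition latent_perm : {perm 'I_h} := perm latent_match_inj.

Lemma ur_attach_latent_perm i x : ur_attach B A (latent_perm i) x = ur_attach B' A' i x.
Proof.
rewrite permE (ur_attachE sltri fa) (ur_attachE sltri' ur_faithful_map).
by rewrite col_support_latent_match upset'E.
Qed.

Lemma ur_aog_map :
  [set ur_relabel latent_perm @: S | S : {set ur_node h n} in ur_aog B' A'] = ur_aog B A.
Proof.
rewrite /ur_aog imsetU -!imset_comp; congr (_ :|: _).
  apply: eq_imset => x /=; rewrite imsetU1 -imset_comp /=; congr (_ |: _).
  suff <- : latent_perm @: [set i | ur_attach B' A' i x] = [set i | ur_attach B A i x].
    by rewrite -imset_comp.
  by apply: perm_imset_eq => i; rewrite !inE ur_attach_latent_perm.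
suff <- : latent_perm @: [set i | [forall x, ~~ ur_attach B' A' i x]] =
          [set i | [forall x, ~~ ur_attach B A i x]].
  by rewrite -imset_comp; apply: eq_imset => i /=; rewrite imset_set1.
by apply: perm_imset_eq => i; rewrite !inE; apply: eq_forallb => x; rewrite ur_attach_latent_perm.
Qed.

End OrderReflecting.

Section AogEquiv.
Hypothesis card_attached : forall k, #|attached B A k| = #|attached B' A' k|.

Lemma upset_cols_map_sub k :
  s @: upset_cols B A k \subset rshift h k |: lshift n @: attached B' A' k.
Proof.
apply/subsetP=> _ /imsetP[c c_up ->]; move: c_up; rewrite inE => /eqP supp.
have [[i sc]|[m sc]] := lshift_or_rshift (s c); rewrite sc !inE.
  apply/orP; right; apply: imset_f; rewrite inE; apply: ur_attach'_of_upset.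
  by rewrite /lat_preimage -sc permK.
have eff' y : (effect_mx A' y m != 0) = le k y.
  by rewrite effect'_neq0 /obs_preimage -sc permK supp inE.
have km : le k m by rewrite -eff' effect_mx_diag ?oner_eq0 //; apply: sltri_acyclic.
have /effect_connect mk : effect_mx A' k m != 0 by rewrite eff' connect0.
rewrite eq_rshift; apply/orP; left; apply/eqP/val_inj/eqP.
by rewrite eqn_leq (sltri_connect_leq sltri' mk) (sltri_connect_leq sltri km).
Qed.

(* [s] maps the columns supported by [upset k] into a set of the same size, hence onto
   it; in particular some such column is sent to [rshift h k]. *)
Lemma col_support_obs_preimage_aog k : col_support B A (obs_preimage k) = upset A k.
Proof.
have : rshift h k \in s @: upset_cols B A k.
  suff -> : s @: upset_cols B A k = rshift h k |: lshift n @: attached B' A' k by rewrite setU11.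
  apply/eqP; rewrite eqEcard upset_cols_map_sub card_rshift_lshift card_imset; last exact: perm_inj.
  by rewrite /= (upset_colsE sltri fa) card_rshift_lshift card_attached.
by case/imsetP=> c; rewrite inE => /eqP supp kc; rewrite /obs_preimage kc permK.
Qed.

Lemma effect'_neq0_aog k y : (effect_mx A' y k != 0) = le k y.
Proof. by rewrite effect'_neq0 col_support_obs_preimage_aog inE. Qed.

Lemma edge'_connect y l : A' y l != 0 -> le l y.
Proof.
elim/(measure_ind (fun l => #|descendants (mx_edge A') l|)): l => l IHl Ayl.
have [|/negbNE/eqP] := boolP (effect_mx A' y l != 0); first by rewrite effect'_neq0_aog.
case/(effect_edge_cancel (sltri_acyclic sltri') Ayl)=> w wl /andP[Twl Ayw].
have lw : le l w by rewrite -effect'_neq0_aog.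
apply: connect_trans lw (IHl _ _ Ayw); apply: (card_descendants_desc (sltri_acyclic sltri')).
by rewrite connect_desc ?(effect_connect Twl) // eq_sym.
Qed.

Lemma connect_of_connect'_aog k y : le' k y -> le k y.
Proof.
apply: (@connect_ind _ _ (fun u => le k u)) => // x z Azx kx.
exact: connect_trans kx (edge'_connect Azx).
Qed.

End AogEquiv.

End URMixEquiv.

Lemma ur_mix_equiv_sym (R : fieldType) h n (W1 W2 : 'M[R]_(n, h + n)) :
  ur_mix_equiv W1 W2 -> ur_mix_equiv W2 W1.
Proof.
case=> s [lam [lam_nz s_mix]]; exists (s^-1)%g, (fun c => (lam ((s^-1)%g c))^-1).
split=> [c|y c]; first by rewrite invr_eq0.
by have := s_mix y ((s^-1)%g c); rewrite permKV => ->; rewrite mulKf.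
Qed.

Lemma ur_aog_class_faithful (R : fieldType) h n (B B' : 'M[R]_(n, h)) (A A' : 'M[R]_n) :
  ur_sltri A -> ur_faithful B A -> ur_aog_class B A B' A' -> ur_faithful B' A'.
Proof.
move=> sltri fa [sltri' [s [lam [lam_nz s_mix]]] [pi /card_attached_relabel card_eq]].
apply: (ur_faithful_map sltri fa sltri' lam_nz s_mix) => k y.
exact: (connect_of_connect'_aog sltri fa sltri' lam_nz s_mix card_eq).
Qed.

Lemma ur_aog_class_of_faithful (R : fieldType) h n (B B' : 'M[R]_(n, h)) (A A' : 'M[R]_n) :
  ur_sltri A -> ur_faithful B A -> ur_sltri A' ->
  ur_mix_equiv (ur_mix B A) (ur_mix B' A') -> ur_faithful B' A' -> ur_aog_class B A B' A'.
Proof.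
move=> sltri fa sltri' mix fa'; split=> //.
have [s' [lam' [lam'_nz s'_mix]]] := ur_mix_equiv_sym mix.
case: mix => s [lam [lam_nz s_mix]].
have connect_of_connect' k y : connect (mx_edge A') k y -> connect (mx_edge A) k y.
  exact: (connect'_of_connect sltri' fa' sltri lam'_nz s'_mix).
by eexists; apply: (ur_aog_map sltri fa sltri' lam_nz s_mix connect_of_connect').
Qed.

Theorem theorem2 :
  (forall (R : realFieldType) (p : nat) (Zs : {set 'I_p}) (C : 'M[R]_p),
     me_dag C -> me_faithful C ->
     [/\ (forall C' : 'M[R]_p, me_aog_class Zs C C' -> me_faithful C'),
         (forall C' : 'M[R]_p, me_dag C' -> me_mix_equiv Zs C C' -> me_faithful C' ->
            me_aog_class Zs C C') &
         (forall C' : 'M[R]_p, me_aog_class Zs C C' <->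
            [/\ me_dag C', me_mix_equiv Zs C C' & me_faithful C'])])
  /\
  (forall (R : realFieldType) (h n : nat) (B : 'M[R]_(n, h)) (A : 'M[R]_n),
     ur_sltri A -> ur_faithful B A ->
     [/\ (forall (B' : 'M[R]_(n, h)) (A' : 'M[R]_n),
            ur_aog_class B A B' A' -> ur_faithful B' A'),
         (forall (B' : 'M[R]_(n, h)) (A' : 'M[R]_n),
            ur_sltri A' -> ur_mix_equiv (ur_mix B A) (ur_mix B' A') ->
            ur_faithful B' A' -> ur_aog_class B A B' A') &
         (forall (B' : 'M[R]_(n, h)) (A' : 'M[R]_n),
            ur_aog_class B A B' A' <->
            [/\ ur_sltri A', ur_mix_equiv (ur_mix B A) (ur_mix B' A') &
                ur_faithful B' A'])]).
Proof.
split=> [R p Zs C dag fa | R h n B A sltri fa].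
  have faithful' C' : me_aog_class Zs C C' -> me_faithful C' := me_aog_class_faithful dag fa.
  have class' C' : me_dag C' -> me_mix_equiv Zs C C' -> me_faithful C' -> me_aog_class Zs C C'
    := me_aog_class_of_faithful dag fa.
  split=> [||C']; [exact: faithful' | exact: class' | split=> [cls|[]]; last exact: class'].
  by have [dag' mix _] := cls; split; last exact: faithful'.
have faithful' B' A' : ur_aog_class B A B' A' -> ur_faithful B' A'
  := ur_aog_class_faithful sltri fa.
have class' B' A' : ur_sltri A' -> ur_mix_equiv (ur_mix B A) (ur_mix B' A') ->
    ur_faithful B' A' -> ur_aog_class B A B' A' := ur_aog_class_of_faithful sltri fa.
split=> [||B' A']; [exact: faithful' | exact: class' | split=> [cls|[]]; last exact: class'].
by have [sltri' mix _] := cls; split; last exact: faithful'.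
Qed.
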